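(* Let $\Lambda$ be a countable index set and let $\{y_\lambda\}_{\lambda\in\Lambda}\subseteq\mathbb R^n$ satisfy: (a) for every compact $K\subseteq\mathbb R^n$ there is $C_K>0$ with $\sup_{x\in\mathbb R^n}|\{\lambda\in\Lambda: x\in y_\lambda+K\}|\le C_K$; (b) there is a bounded open neighbourhood $U$ of the origin with $\mathbb R^n=\bigcup_{\lambda\in\Lambda}(y_\lambda+U)$. Then for every $h>0$ and $\varepsilon>0$ there is $R>0$ such that $$\sup_{\mu\in\Lambda}\sum_{\{\lambda\in\Lambda:\,|y_\lambda-y_\mu|>R\}}e^{-A(h|y_\lambda-y_\mu|)}\le\varepsilon.$$
   Context: $\{A_p\}_{p\in\mathbb N}$ is a sequence of positive numbers with $A_0=A_1=1$ satisfying (M.1) $A_p^2\le A_{p-1}A_{p+1}$ ($p\ge1$), (M.2) $A_{p+q}\le c_0H^{p+q}A_pA_q$ for some $c_0,H\ge1$, (M.6) $p!\le c_0L_0^pA_p$ for some $c_0,L_0\ge1$, and (M.2)$^*$: $2m_p\le m_{pN}$ for $p\ge p_0$, some $p_0,N\in\mathbb Z_+$, where $m_j=A_j/A_{j-1}$. Its associated function is $A(\rho)=\sup_{p\in\mathbb N}\ln(\rho^p/A_p)$, $\rho\ge0$. *)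

From HB Require Import structures.
From mathcomp Require Import all_boot all_order all_algebra.
From mathcomp Require Import all_classical all_reals all_analysis.
Set Implicit Arguments. Unset Strict Implicit. Unset Printing Implicit Defensive.
Import Order.TTheory GRing.Theory Num.Theory.
Import numFieldNormedType.Exports.
Local Open Scope ring_scope.
Local Open Scope classical_set_scope.

Definition eucl {R : realType} {n : nat} (v : 'rV[R]_n) : R :=
  Num.sqrt (\sum_(i < n) v ord0 i ^+ 2).

Definition mseq {R : realType} (A : nat -> R) (j : nat) : R := A j / A j.-1.

Definition assoc_term {R : realType} (A : nat -> R) (rho : R) (p : nat) : \bar R :=
  if 0 < rho ^+ p / A p then (ln (rho ^+ p / A p))%:E else -oo%E.

Definition assocA {R : realType} (A : nat -> R) (rho : R) : \bar R :=
  ereal_sup [set assoc_term A rho p | p in [set: nat]].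

From HB Require Import structures.
From mathcomp Require Import all_boot all_order all_algebra.
From mathcomp Require Import all_classical all_reals all_analysis.
From mathcomp Require Import ring lra.
Import Order.TTheory GRing.Theory Num.Theory.
Import numFieldNormedType.Exports.
Local Open Scope ring_scope.
Local Open Scope classical_set_scope.

(* Since A(rho) >= ln (rho^p / A_p) for every p, exp (-A(h d)) <= A_p (h d)^-p;
   the choice p = 2n+1 suffices, so of the hypotheses only A_p > 0 and the
   bounded overlap (a) are used.  Sort the points y_l - y_mu into the unit cubes
   prod_i +-[k_i, k_i+1): by (a) each cube holds at most C of them, and a point
   of the cube k at distance d > r >= 1 has d^-(2n+1) <= r^-1 prod_i 4/(k_i+1)^2.
   Summing over all cubes gives sum_{d > r} d^-(2n+1) <= C 16^n / r, uniformly
   in mu. *)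

Section Bounds.
Context {R : realType}.

Lemma div_1Ddiv_le (b e : R) : 0 <= b -> 0 < e -> b / (1 + b / e) <= e.
Proof.
move=> b_ge0 e_gt0; have be_ge0 : 0 <= b / e by rewrite divr_ge0 // ltW.
rewrite ler_pdivrMr; last lra.
by rewrite mulrDr mulr1 [e * _]mulrC divfK ?gt_eqF //; lra.
Qed.

Lemma sum_inv_sqr_le2 (m : nat) : \sum_(k < m) (k.+1%:R ^+ 2)^-1 <= 2 :> R.
Proof.
suff tele k : \sum_(i < k.+1) (i.+1%:R ^+ 2)^-1 + k.+1%:R^-1 <= 2 :> R.
  case: m => [|m]; first by rewrite big_ord0 ler0n.
  by apply: le_trans (tele m); rewrite lerDl invr_ge0.
elim: k => [|k IH]; first by rewrite big_ord1 expr1n invr1; lra.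
rewrite big_ord_recr /= -addrA; apply: le_trans IH; rewrite lerD2l.
have a1 : 1 <= k.+1%:R :> R by rewrite ler1n.
rewrite -[k.+2%:R]natr1; move: (k.+1%:R) a1 => a a1.
rewrite -subr_ge0.
have -> : a^-1 - (((a + 1) ^+ 2)^-1 + (a + 1)^-1) = (a * (a + 1) ^+ 2)^-1.
  by field; apply/andP; split; apply/negP => /eqP; lra.
by rewrite invr_ge0 mulr_ge0 ?sqr_ge0 //; lra.
Qed.

Lemma signed_truncn_near (w : R) :
  `|(if 0 <= w then (Num.truncn `|w|)%:R else - (Num.truncn `|w|)%:R) - w| <= 1.
Proof.
have /andP[k_le lt_k1] := truncn_itv (normr_ge0 w).
rewrite -natr1 in lt_k1; move: (Num.truncn `|w|) k_le lt_k1 => k k_le lt_k1.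
case: ifPn => [w0 | ]; last rewrite -ltNge => w0.
- by rewrite ger0_norm // in k_le lt_k1; rewrite ler_norml; apply/andP; split; lra.
- by rewrite ltr0_norm // in k_le lt_k1; rewrite ler_norml; apply/andP; split; lra.
Qed.

Section RowVectors.
Context {n : nat}.

Definition cube1 : set 'rV[R]_n := [set w | forall i, `[(-1 : R), 1]%classic (w ord0 i)].

Lemma compact_cube1 : compact cube1.
Proof.
by apply: (@rV_compact _ _ (fun=> `[(-1 : R), 1]%classic)) => _; exact: segment_compact.
Qed.

Lemma eucl_ge0 (v : 'rV[R]_n) : 0 <= eucl v.
Proof. exact: sqrtr_ge0. Qed.

Lemma norm_coord_le_eucl (v : 'rV[R]_n) (i : 'I_n) :
  `|v ord0 i| <= eucl v.
Proof.
rewrite /eucl -sqrtr_sqr ler_sqrt; last by apply: sumr_ge0 => j _; exact: sqr_ge0.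
by rewrite (bigD1 i) //= lerDl; apply: sumr_ge0 => j _; exact: sqr_ge0.
Qed.

Section UnitCubes.
Variable M : nat.

Local Notation cube := {ffun 'I_n -> bool * 'I_M.+1}.

(* [inord] clamps the integer part of |v_i| to M: [cube_of v] is the cube
   containing v only when [eucl v < M.+1]. *)
Definition cube_of (v : 'rV[R]_n) : cube :=
  [ffun i => (0 <= v ord0 i, inord (Num.truncn `|v ord0 i|))].

Definition cube_corner (z : cube) : 'rV[R]_n :=
  \row_i (if (z i).1 then (z i).2%:R else - (z i).2%:R).

(* [4 / (k_i+1)^2] bounds [d^-2] as soon as [k_i <= d] and [1 <= d]; summed over
   the sign and k_i it is at most 2 * 4 * 2 = 16. *)
Definition cube_weight (z : cube) : R :=
  \prod_i (4 / ((z i).2.+1%:R ^+ 2)).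

Lemma cube_weight_ge0 (z : cube) : 0 <= cube_weight z.
Proof. by apply: prodr_ge0 => i _; rewrite divr_ge0 ?sqr_ge0. Qed.

Lemma cube_of_index (v : 'rV[R]_n) (i : 'I_n) : eucl v < M.+1%:R ->
  (cube_of v i).2 = Num.truncn `|v ord0 i| :> nat.
Proof.
move=> vM; rewrite ffunE /= inordK // truncn_lt_nat //.
exact: le_lt_trans (norm_coord_le_eucl v i) vM.
Qed.

Lemma cube_corner_near (v : 'rV[R]_n) (i : 'I_n) : eucl v < M.+1%:R ->
  `|cube_corner (cube_of v) ord0 i - v ord0 i| <= 1.
Proof.
by move=> vM; rewrite mxE (cube_of_index v i vM) ffunE; exact: signed_truncn_near.
Qed.

Lemma inv_eucl_pow_le_cube_weight (v : 'rV[R]_n) (r : R) :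
  1 <= r -> r < eucl v -> eucl v < M.+1%:R ->
  (eucl v ^+ (2 * n).+1)^-1 <= cube_weight (cube_of v) / r.
Proof.
move=> r1 r_lt vM; set d := eucl v in r_lt vM *.
have r_gt0 : 0 < r by lra.
have d_gt0 : 0 < d by lra.
rewrite exprS invfM mulrC; apply: ler_pM.
- by rewrite invr_ge0 exprn_ge0 // ltW.
- by rewrite invr_ge0 ltW.
- rewrite exprM -[n in _ ^+ n]card_ord -prodr_const -prodfV; apply: ler_prod => i _.
  rewrite invr_ge0 sqr_ge0 /= -[4 / _]invf_div lef_pV2 ?posrE ?exprn_gt0 ?divr_gt0 //.
  have k_le : (cube_of v i).2%:R <= d.
    rewrite (cube_of_index v i vM); apply: le_trans (norm_coord_le_eucl v i).
    by have /andP[] := truncn_itv (normr_ge0 (v ord0 i)).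
  have k_ge0 : 0 <= (cube_of v i).2%:R :> R by exact: ler0n.
  rewrite ler_pdivrMr ?exprn_gt0 // -natr1; nra.
- by rewrite lef_pV2 ?posrE //; exact: ltW.
Qed.

Lemma sum_cube_weight_le : \sum_z cube_weight z <= 16 ^+ n.
Proof.
have -> : \sum_z cube_weight z =
    \prod_(i < n) \sum_(j : bool * 'I_M.+1) 4 / (j.2.+1%:R ^+ 2).
  by rewrite bigA_distr_bigA.
rewrite prodr_const card_ord.
rewrite lerXn2r ?nnegrE //; first by apply: sumr_ge0 => j _; rewrite divr_ge0 ?sqr_ge0.
rewrite -(pair_bigA _ (fun (b : bool) (k : 'I_M.+1) => 4 / (k.+1%:R ^+ 2))) /=.
rewrite big_bool /= -mulr_sumr.
have := sum_inv_sqr_le2 M.+1; lra.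
Qed.

End UnitCubes.

Lemma sum_inv_eucl_pow_le {T : eqType} {y : T -> 'rV[R]_n} {y0 : 'rV[R]_n}
    {C r : R} {s : seq T} :
  (forall (x : 'rV[R]_n) (s' : seq T), uniq s' ->
     (forall l, l \in s' -> exists2 k, cube1 k & x = y l + k) ->
     (size s')%:R <= C) ->
  1 <= r -> uniq s -> (forall l, l \in s -> r < eucl (y l - y0)) ->
  \sum_(l <- s) (eucl (y l - y0) ^+ (2 * n).+1)^-1 <= C * 16 ^+ n / r.
Proof.
move=> overlap r1 s_uniq s_far.
have C_ge0 : 0 <= C by apply: (overlap 0 [::]).
have r_ge0 : 0 <= r by lra.
pose M := (\max_(l <- s) Num.truncn (eucl (y l - y0)))%N.
have yM l : l \in s -> eucl (y l - y0) < M.+1%:R.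
  move=> ls; rewrite -truncn_lt_nat ?eucl_ge0 // ltnS.
  exact: (@leq_bigmax_seq _ s xpredT (fun l => Num.truncn (eucl (y l - y0)))).
pose zy l := cube_of M (y l - y0).
apply: (@le_trans _ _ (\sum_(l <- s) cube_weight M (zy l) / r)).
  rewrite big_seq [X in _ <= X]big_seq; apply: ler_sum => l ls.
  exact: inv_eucl_pow_le_cube_weight _ _ _ r1 (s_far l ls) (yM l ls).
rewrite (partition_big zy xpredT) //=.
apply: (@le_trans _ _ (\sum_z C * (cube_weight M z / r))).
  apply: ler_sum => z _.
  rewrite (eq_bigr (fun=> cube_weight M z / r)); last by move=> l /eqP <-.
  rewrite big_const_seq iter_addr_0 -mulr_natl ler_wpM2r ?divr_ge0 ?cube_weight_ge0 //.
  rewrite -size_filter; apply: overlap (y0 + cube_corner M z) _ (filter_uniq _ s_uniq) _.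
  move=> l; rewrite mem_filter => /andP[/eqP <- ls].
  exists (y0 + cube_corner M (zy l) - y l); last by rewrite addrCA subrr addr0.
  move=> i; have := cube_corner_near _ _ i (yM l ls); rewrite /zy.
  move: (cube_corner _ _) => c; rewrite !mxE /= ler_norml => /andP[c_lo c_hi].
  by rewrite in_itv /=; apply/andP; split; lra.
rewrite -mulr_sumr -mulr_suml -mulrA ler_wpM2l // ler_wpM2r ?invr_ge0 //.
exact: sum_cube_weight_le.
Qed.

End RowVectors.

Lemma esum_le_seq (T : choiceType) (S : set T) (a : T -> \bar R) (c : \bar R) :
  (forall s : seq T, uniq s -> (forall x, x \in s -> S x) ->
     (\sum_(x <- s) a x <= c)%E) ->
  (\esum_(x in S) a x <= c)%E.
Proof.
move=> seq_le; apply: ge_ereal_sup => _ [X [X_fin XS] <-].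
rewrite fsbig_finite //=; apply: seq_le; first exact: finmap.fset_uniq.
by move=> x; rewrite in_fset_set // inE => /XS.
Qed.

Lemma expeRN_assocA_le (A : nat -> R) (rho : R) (p : nat) :
  (forall p, 0 < A p) -> 0 < rho ->
  (expeR (- assocA A rho) <= (A p / rho ^+ p)%:E)%E.
Proof.
move=> A_gt0 rho_gt0.
have q_gt0 : 0 < rho ^+ p / A p by rewrite divr_gt0 // exprn_gt0.
have term_le : ((ln (rho ^+ p / A p))%:E <= assocA A rho)%E.
  by apply: ereal_sup_ubound; exists p => //; rewrite /assoc_term q_gt0.
apply: (@le_trans _ _ (expeR (- (ln (rho ^+ p / A p))%:E))).
  by rewrite lee_expeR leeN2.
by rewrite /= lee_fin expRN lnK ?posrE // invf_div.
Qed.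

Lemma sum_expeRN_assocA_le {T : eqType} {A : nat -> R} {h : R} {d : T -> R}
    {s : seq T} (p : nat) :
  (forall p, 0 < A p) -> 0 < h -> (forall l, l \in s -> 0 < d l) ->
  (\sum_(l <- s) expeR (- assocA A (h * d l)) <=
     (A p / h ^+ p * \sum_(l <- s) (d l ^+ p)^-1)%:E)%E.
Proof.
move=> A_gt0 h_gt0 d_gt0.
rewrite mulr_sumr -sumEFin big_seq [X in (_ <= X)%E]big_seq; apply: lee_sum => l ls.
apply: le_trans (expeRN_assocA_le _ _ p A_gt0 (mulr_gt0 h_gt0 (d_gt0 l ls))) _.
by rewrite exprMn invfM mulrA.
Qed.

End Bounds.

Theorem lemma3p16 (R : realType) (A : nat -> R) (n : nat)
  (Lam : countType) (y : Lam -> 'rV[R]_n) :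
  (forall p, 0 < A p) -> A 0%N = 1 -> A 1%N = 1 ->
  (* (M.1) *)
  (forall p : nat, (1 <= p)%N -> A p ^+ 2 <= A p.-1 * A p.+1) ->
  (* (M.2) *)
  (exists c0 H : R, 1 <= c0 /\ 1 <= H /\
     forall p q : nat, A (p + q)%N <= c0 * H ^+ (p + q) * A p * A q) ->
  (* (M.6) *)
  (exists c0 L0 : R, 1 <= c0 /\ 1 <= L0 /\
     forall p : nat, (p`!)%:R <= c0 * L0 ^+ p * A p) ->
  (* (M.2)^* *)
  (exists p0 N : nat, (0 < p0)%N /\ (0 < N)%N /\
     forall p : nat, (p0 <= p)%N -> 2 * mseq A p <= mseq A (p * N)%N) ->
  (* (a) *)
  (forall K : set 'rV[R]_n, compact K ->
     exists CK : R, 0 < CK /\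
       forall (x : 'rV[R]_n) (s : seq Lam), uniq s ->
         (forall l, l \in s -> exists2 k, K k & x = y l + k) ->
         (size s)%:R <= CK) ->
  (* (b) *)
  (exists U : set 'rV[R]_n, open U /\ U 0 /\
     (exists M : R, forall u, U u -> eucl u <= M) /\
     forall x : 'rV[R]_n, exists l : Lam, exists2 u, U u & x = y l + u) ->
  forall h eps : R, 0 < h -> 0 < eps ->
  exists Rr : R, 0 < Rr /\
    forall mu : Lam,
      (\esum_(l in [set l | (Rr < eucl (y l - y mu))%R])
          expeR (- assocA A (h * eucl (y l - y mu))%R) <= eps%:E)%E.
Proof.
move=> A_gt0 _ _ _ _ _ _ overlap _ h eps h_gt0 eps_gt0.
have [C [C_gt0 C_bound]] := overlap _ compact_cube1.
pose p := (2 * n).+1.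
pose B := A p / h ^+ p * (C * 16 ^+ n).
have B_ge0 : 0 <= B by rewrite !mulr_ge0 ?invr_ge0 ?exprn_ge0 // ltW.
have B_eps_ge0 : 0 <= B / eps by rewrite divr_ge0 // ltW.
exists (1 + B / eps); split => [|mu]; first lra.
apply: esum_le_seq => s s_uniq s_far.
have far l : l \in s -> 1 + B / eps < eucl (y l - y mu) by exact: s_far.
apply: le_trans (sum_expeRN_assocA_le p A_gt0 h_gt0 _) _.
  by move=> l /far; lra.
rewrite lee_fin; apply: le_trans (ler_wpM2l _ (sum_inv_eucl_pow_le C_bound _ s_uniq far)) _.
- by rewrite divr_ge0 ?exprn_ge0 // ltW.
- lra.
- by rewrite mulrA; exact: div_1Ddiv_le.
Qed.
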